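(* Let $0<r<\frac12$ and let $X\subseteq S^1$ be a finite subset. If $X$ is an $\varepsilon$-covering of $S^1$ for some $\varepsilon>0$, then $\mathrm{wf}_{<}(X;r)>r-2\varepsilon$.
   Context: $S^1$ is the circle of circumference $1$ with arc-length metric; points are identified with numbers in $[0,1)$ and $\vec d(x,y)$ is the clockwise distance from $x$ to $y$. $X$ is an $\varepsilon$-covering of $S^1$ if every point of $S^1$ is at distance less than $\varepsilon$ from some point of $X$. For finite $X$ and $0<r<\frac12$, $\overrightarrow{\mathbf{VR}}_{<}(X;r)$ is the directed graph on $X$ with $x_1\to x_2$ iff $0<\vec d(x_1,x_2)<r$, a cyclic graph with respect to the clockwise order of $X$, and $\mathrm{wf}_{<}(X;r)$ is its winding fraction: $\sup\{k/n:\exists$ cyclic homomorphism $\overrightarrow{C_n^k}\to\overrightarrow{\mathbf{VR}}_{<}(X;r)\}$. Here $\overrightarrow{C_n^k}$ ($0\le k<n/2$) has vertices $\{0,\dots,n-1\}$ with $i\to j$ iff $0<(j-i)\bmod n\le k$; a cyclic homomorphism between cyclic graphs (directed graphs with cyclic vertex orders $v_0\prec\cdots\prec v_{n-1}$ such that $v_i\to v_j$ implies $j=i+1$ or both $v_i\to v_{j-1}$, $v_{i+1}\to v_j$) is a vertex map that sends each edge $v\to w$ to an edge or a single vertex, whose fibres are cyclic intervals of consecutive vertices, which satisfies ''$f(s)\prec f(s')\prec f(s'')$ in cyclic betweenness implies $s\prec s'\prec s''$'', and which is non-constant if the source has a directed cycle. *)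

From HB Require Import structures.
From mathcomp Require Import ssreflect ssrfun ssrbool eqtype ssrnat div seq path choice fintype finset fingraph order ssralg ssrnum ssrint archimedean.
From mathcomp Require Import classical_sets reals.
Set Implicit Arguments. Unset Strict Implicit. Unset Printing Implicit Defensive.
Import Order.TTheory GRing.Theory Num.Theory.
Local Open Scope ring_scope.

(* ---------- The circle S^1 = R/Z, points represented in [0,1) ---------- *)
Section Circle.
Variable R : realType.

(* clockwise distance from x to y: the representative of y - x in [0,1) *)
Definition cw_dist (x y : R) : R := (y - x) - (Num.floor (y - x))%:~R.

Definition circ_dist (x y : R) : R := Num.min (cw_dist x y) (cw_dist y x).

Definition in_S1 (x : R) : bool := (0 <= x) && (x < 1).

Definition eps_covering (X : seq R) (eps : R) : Prop :=
  forall p : R, in_S1 p -> exists2 x, x \in X & circ_dist p x < eps.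
End Circle.

(* ---------- Cyclic graphs: vertices 'I_n with cyclic order 0 < 1 < ... < n-1 *)

Definition cyc_btw (a b c : nat) : bool :=
  [|| (a < b < c)%N, (b < c < a)%N | (c < a < b)%N].

(* A is a cyclic interval of consecutive vertices {a, a+1, ..., a+l-1} (mod n)
   (l = 0 gives the empty set, l = n the whole vertex set) *)
Definition cyc_interval (n : nat) (A : {set 'I_n}) : Prop :=
  exists a l : nat, (l <= n)%N /\ A = [set i : 'I_n | ((i + n - a %% n) %% n < l)%N].

Definition has_dicycle (T : finType) (e : rel T) : Prop :=
  exists x y, e x y /\ connect e y x.

Definition cyc_hom (n m : nat) (eG : rel 'I_n) (eH : rel 'I_m) (f : 'I_n -> 'I_m)
  : Prop :=
  [/\ (forall v w, eG v w -> eH (f v) (f w) \/ f v = f w),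
      (forall y : 'I_m, cyc_interval [set s | f s == y]),
      (forall s s' s'' : 'I_n, cyc_btw (f s) (f s') (f s'') -> cyc_btw s s' s'')
    & (has_dicycle eG -> exists s s', f s <> f s')].

Definition Cnk_edge (n k : nat) : rel 'I_n :=
  fun i j => (0 < (j + n - i) %% n <= k)%N.
Arguments Cnk_edge : clear implicits.

Section VR.
Variable R : realType.

(* vertices of VR_<(X;r): the points of X listed in clockwise (increasing) order *)
Definition cw_sorted (X : seq R) : seq R := sort <=%R X.

Definition VR_edge (X : seq R) (r : R) : rel 'I_(size X) :=
  fun i j => let x1 := nth 0 (cw_sorted X) i in let x2 := nth 0 (cw_sorted X) j in
    (0 < cw_dist x1 x2) && (cw_dist x1 x2 < r).
Arguments VR_edge : clear implicits.

Definition wf_lt (X : seq R) (r : R) : R :=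
  sup [set q : R | exists (n k : nat), (2 * k < n)%N /\
        (exists f : 'I_n -> 'I_(size X), cyc_hom (Cnk_edge n k) (VR_edge X r) f) /\
        q = ((k%:R : R) / (n%:R : R))%R].
End VR.

From HB Require Import structures.
From mathcomp Require Import ssreflect ssrfun ssrbool eqtype ssrnat div seq path choice fintype finset fingraph order ssralg ssrnum ssrint archimedean.
From mathcomp Require Import classical_sets reals.
From mathcomp Require Import lra zify.
Set Implicit Arguments. Unset Strict Implicit. Unset Printing Implicit Defensive.
Import Order.TTheory GRing.Theory Num.Theory.
Local Open Scope ring_scope.

(* Sort X as x_0 < ... < x_(m-1) and unroll it to y_0 < ... < y_m = x_0 + 1.
   In an eps-covering every gap y_(j+1) - y_j is below 2 eps, hence below a
   common d < 2 eps.  Sending the grid point t_i = y_0 + i/n to the last y_j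
   with y_j <= t_i is nondecreasing, hence a cyclic homomorphism from C_n^k to
   VR_<(X;r) as soon as k/n + d <= r: vertices at most k/n apart on the grid
   land on points less than k/n + d apart clockwise.  Taking n large and
   k = floor((r - d) n) makes k/n exceed r - 2 eps. *)

Section CircleDistance.
Variable R : realType.
Implicit Types a b p z : R.

Lemma cw_distE a b : in_S1 a -> in_S1 b ->
  cw_dist a b = b + (b < a)%R%:R - a.
Proof.
move=> /andP[a0 a1] /andP[b0 b1]; rewrite /cw_dist.
have [ba|ab] := ltrP b a.
  have -> : Num.floor (b - a) = -1.
    by apply: floor_def; rewrite rmorphN rmorph1 /= addNr; lra.
  by rewrite rmorphN rmorph1 opprK addrAC.
have -> : Num.floor (b - a) = 0 by apply: floor_def; rewrite /= !rmorphD /=; lra.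
by rewrite subr0 addr0.
Qed.

Lemma cw_dist_gt0 a b : in_S1 a -> in_S1 b -> a != b -> 0 < cw_dist a b.
Proof.
move=> aS bS ab; rewrite cw_distE //; move: aS bS => /andP[a0 a1] /andP[b0 b1].
have [ba|] := ltrP b a; rewrite /= ?mulr1n ?addr0; first lra.
by rewrite le_eqVlt (negbTE ab) /=; lra.
Qed.

Lemma circ_dist_lt_cases p z eps : in_S1 p -> in_S1 z -> circ_dist p z < eps ->
  [\/ p - eps < z < p + eps, p - eps < z + 1 < p + eps | p - eps < z - 1 < p + eps].
Proof.
move=> pS zS; rewrite /circ_dist gt_min !cw_distE //.
case/andP: pS => p0 p1; case/andP: zS => z0 z1.
have [zp|pz] := ltrP z p; have [pz'|zp'] := ltrP p z;
  rewrite /= ?mulr1n ?addr0 => /orP[] d;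
  first [ (apply: Or31; apply/andP; split; lra)
        | (apply: Or32; apply/andP; split; lra)
        | (apply: Or33; apply/andP; split; lra) ].
Qed.

Lemma covering_size_gt0 (X : seq R) eps : eps_covering X eps -> (0 < size X)%N.
Proof.
by move=> cov; have [|z zX _] := cov 0; [rewrite /in_S1 lexx ltr01 | case: (X) zX].
Qed.

End CircleDistance.

Lemma cyc_interval_range n a b : (a <= n)%N -> (b <= n)%N ->
  cyc_interval [set i : 'I_n | a <= i < b]%N.
Proof.
(* When b < a the truncated length b - a is 0: both sides are empty. *)
move=> an bn; exists a, (b - a)%N; split; first lia.
apply/setP => i; rewrite !inE; have ilt := ltn_ord i.
have [{}an|] := ltnP a n; last first.
  move=> na; have -> : a = n by lia.
  by rewrite modnn subn0 modnDr modn_small //; lia.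
rewrite (modn_small an); have [ai|ia] := leqP a i.
  by rewrite -addnBAC // modnDr modn_small; lia.
by rewrite modn_small; lia.
Qed.

Section NondecreasingMaps.
Variables (n m : nat) (F : 'I_n -> 'I_m).
Hypothesis F_mono : forall i j : 'I_n, (i <= j)%N -> (F i <= F j)%N.

Lemma nondecreasing_threshold (c : pred nat) :
    (forall u v, (u <= v)%N -> c u -> c v) ->
  exists2 a, (a <= n)%N & forall i : 'I_n, c (F i) = (a <= i)%N.
Proof.
move=> c_up; pose p s := [forall i : 'I_n, (s <= i)%N ==> c (F i)].
have p_up s t : (s <= t)%N -> p s -> p t.
  move=> st /forallP ps; apply/forallP => i; apply/implyP => ti.
  by apply: (implyP (ps i)); apply: leq_trans ti.
have pn : p n by apply/forallP => i; rewrite leqNgt ltn_ord.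
have pE (i : 'I_n) : p i = c (F i).
  apply/idP/idP => [/forallP/(_ i)|ci]; first by rewrite leqnn.
  by apply/forallP => j; apply/implyP => ij; exact: c_up _ _ (F_mono ij) ci.
case: (ex_minnP (ex_intro p n pn)) => a pa a_min.
exists a => [|i]; first exact: a_min.
by rewrite -pE; apply/idP/idP => [/a_min|ai]; last exact: p_up ai pa.
Qed.

Lemma nondecreasing_fibre (y : 'I_m) : cyc_interval [set s | F s == y].
Proof.
have [a an Fa] := nondecreasing_threshold (c := fun u => y <= u)%N
  (fun u v uv yu => leq_trans yu uv).
have [b bn Fb] := nondecreasing_threshold (c := fun u => y < u)%N
  (fun u v uv yu => leq_trans yu uv).
suff -> : [set s | F s == y] = [set i : 'I_n | a <= i < b]%N.
  exact: cyc_interval_range.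
by apply/setP => i; rewrite !inE -val_eqE /= eqn_leq andbC Fa (leqNgt (F i)) Fb -ltnNge.
Qed.

Lemma nondecreasing_cyc_hom k (eH : rel 'I_m) :
    (forall v w, Cnk_edge n k v w -> eH (F v) (F w) \/ F v = F w) ->
    (exists s s', F s <> F s') ->
  cyc_hom (Cnk_edge n k) eH F.
Proof.
move=> F_edge F_nonconst; split => //; first exact: nondecreasing_fibre.
have lt i j : (F i < F j)%N -> (i < j)%N.
  by move=> h; rewrite ltnNge; apply/negP => /F_mono; rewrite leqNgt h.
move=> s s' s''; rewrite /cyc_btw => /or3P[]/andP[h1 h2]; apply/or3P;
  [apply: Or31 | apply: Or32 | apply: Or33]; by rewrite (lt _ _ h1) (lt _ _ h2).
Qed.

End NondecreasingMaps.

Section WindingFraction.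
Variables (R : realType) (X : seq R) (r : R).

Lemma le_wf_lt n k (f : 'I_n -> 'I_(size X)) : (2 * k < n)%N ->
  cyc_hom (Cnk_edge n k) (@VR_edge R X r) f -> k%:R / n%:R <= wf_lt X r.
Proof.
move=> kn fhom; apply: ub_le_sup; last by exists n, k; split => //; split => //; exists f.
exists 1 => _ [n' [k' [kn' [_ ->]]]].
by rewrite ler_pdivrMr ?ltr0n ?mul1r ?ler_nat; lia.
Qed.

Lemma wf_lt_ge0 : (0 < size X)%N -> 0 <= wf_lt X r.
Proof.
move=> X0; rewrite -[0](mul0r 1^-1); apply: (@le_wf_lt 1 0 (fun=> Ordinal X0)) => //.
split.
- by move=> v w; rewrite /Cnk_edge; lia.
- exact: nondecreasing_fibre.
- by move=> ? ? ? /or3P[]/andP[]; rewrite ltnn.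
- by move=> [v [w [+ _]]]; rewrite /Cnk_edge; lia.
Qed.

End WindingFraction.

Lemma exists_fraction_approx (R : realType) (a delta c : R) :
    0 <= a -> a < 2^-1 -> 0 < delta -> 0 < c ->
  exists n k : nat, [/\ (2 * k < n)%N, k%:R / n%:R <= a,
                        a - delta < k%:R / n%:R & n%:R^-1 <= c].
Proof.
move=> a0 a_half delta0 c0.
have delta_inv : 0 < delta^-1 by rewrite invr_gt0.
have c_inv : 0 < c^-1 by rewrite invr_gt0.
pose n := (Num.truncn (delta^-1 + c^-1)).+1.
have n_gt : delta^-1 + c^-1 < n%:R by apply: truncnS_gt.
have n0 : 0 < (n%:R : R) by rewrite ltr0Sn.
have inv_lt (z : R) : 0 < z -> z^-1 < n%:R -> n%:R^-1 < z.
  by move=> z0 zn; rewrite -[z]invrK ltf_pV2 ?posrE ?invr_gt0.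
pose k := Num.truncn (a * n%:R).
have [k_le k_gt] : k%:R <= a * n%:R /\ a * n%:R < k.+1%:R.
  by apply/andP; apply: truncn_itv; apply: mulr_ge0; lra.
exists n, k; split.
- rewrite -(ltr_nat R) natrM.
  have : a * n%:R < 2^-1 * n%:R by rewrite ltr_pM2r.
  lra.
- by rewrite ler_pdivrMr.
- have : a < k.+1%:R / n%:R by rewrite ltr_pdivlMr.
  have : n%:R^-1 < delta by apply: inv_lt => //; lra.
  by rewrite -natr1 mulrDl mul1r; lra.
- by apply/ltW/inv_lt => //; lra.
Qed.

Definition snap_index (R : realType) (y : nat -> R) (m : nat) (t : R) : nat :=
  find (fun j => t < y j.+1) (iota 0 m).

Lemma snap_indexP (R : realType) (y : nat -> R) m t : y 0%N <= t < y m ->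
  (snap_index y m t < m)%N &&
  (y (snap_index y m t) <= t < y (snap_index y m t).+1).
Proof.
move=> /andP[y0t tym]; have m0 : (0 < m)%N by case: m tym => //; lra.
set j := snap_index y m t.
have has_j : has (fun j => t < y j.+1) (iota 0 m).
  by apply/hasP; exists m.-1; rewrite ?mem_iota ?prednK //=; lia.
have jm : (j < m)%N by rewrite -[m in (_ < m)%N](size_iota 0) -has_find.
have := nth_find 0 has_j; rewrite -/j nth_iota //= => tj.
rewrite jm tj andbT; case Ej : j => [//|j'].
have /(before_find 0) : (j' < j)%N by rewrite Ej.
by rewrite nth_iota /=; [move/negbT; rewrite -leNgt | lia].
Qed.

Lemma grid_cyc_diff (R : realType) (y0 : R) n (v w : 'I_n) :
  y0 + w%:R / n%:R + (w < v)%N%:R =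
  y0 + v%:R / n%:R + ((w + n - v) %% n)%N%:R / n%:R.
Proof.
have vn := ltn_ord v; have wn := ltn_ord w.
have n0 : (n%:R : R) != 0 by rewrite pnatr_eq0 -lt0n; lia.
have [vw|wv] := leqP v w; rewrite /=.
  rewrite -addnBAC // modnDr modn_small; last by lia.
  by rewrite natrB // mulrBl addr0; lra.
rewrite modn_small; last by lia.
rewrite natrB; last by lia.
by rewrite natrD !mulrBl mulrDl divff //; lra.
Qed.

Lemma exists_ub_lt (R : realType) (g : nat -> R) c m :
    (forall j, (j < m)%N -> g j < c) ->
  exists2 d, d < c & forall j, (j < m)%N -> g j <= d.
Proof.
elim: m => [|m IH] g_lt; first by exists (c - 1) => //; lra.
have [d dc dg] := IH (fun j jm => g_lt j (ltnW jm)).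
exists (Num.max d (g m)); first by rewrite gt_max dc g_lt.
move=> j; rewrite ltnS leq_eqVlt => /orP[/eqP->|/dg gd]; rewrite le_max ?lexx ?orbT //.
by rewrite gd.
Qed.

Definition unrolled (R : realType) (X : seq R) (j : nat) : R :=
  if (j < size X)%N then nth 0 (cw_sorted X) j else nth 0 (cw_sorted X) 0 + 1.

Section SortedPoints.
Variables (R : realType) (X : seq R).
Hypotheses (X_uniq : uniq X) (X_S1 : all (@in_S1 R) X) (X_nonempty : (0 < size X)%N).
Local Notation m := (size X).
Local Notation x := (nth 0 (cw_sorted X)).
Local Notation y := (unrolled X).

Lemma size_cw_sorted : size (cw_sorted X) = m.
Proof. exact: size_sort. Qed.

Lemma cw_sorted_lt : sorted <%R (cw_sorted X).
Proof. by rewrite lt_sorted_uniq_le sort_uniq X_uniq sort_sorted //; apply: le_total. Qed.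

Lemma cw_sorted_in_S1 j : (j < m)%N -> in_S1 (x j).
Proof.
by move=> jm; apply: (allP X_S1); rewrite -(mem_sort <=%R) mem_nth ?size_cw_sorted.
Qed.

Lemma unrolledE j : (j < m)%N -> y j = x j.
Proof. by rewrite /unrolled => ->. Qed.

Lemma unrolled_size : y m = y 0%N + 1.
Proof. by rewrite /unrolled ltnn X_nonempty. Qed.

Lemma unrolled_in_S1 j : (j < m)%N -> 0 <= y j < 1.
Proof. by move=> jm; rewrite unrolledE //; apply: cw_sorted_in_S1. Qed.

Lemma unrolled_lt i j : (i < j <= m)%N -> y i < y j.
Proof.
move=> /andP[ij jm]; have im : (i < m)%N := leq_trans ij jm.
have [{}jm|mj] := ltnP j m.
  by rewrite !unrolledE // (lt_sorted_ltn_nth 0 cw_sorted_lt) ?inE ?size_cw_sorted.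
have -> : j = m by apply/eqP; rewrite eqn_leq jm mj.
move: (unrolled_in_S1 im) (unrolled_in_S1 X_nonempty); rewrite unrolled_size; lra.
Qed.

Lemma unrolled_le i j : (i <= j <= m)%N -> y i <= y j.
Proof.
move=> /andP[]; rewrite leq_eqVlt => /orP[/eqP-> //|ij jm].
by apply/ltW/unrolled_lt; rewrite ij.
Qed.

Lemma cw_dist_cw_sorted a b : (a < m)%N -> (b < m)%N ->
  cw_dist (x a) (x b) = y b + (b < a)%N%:R - y a.
Proof.
move=> am bm; rewrite cw_distE ?cw_sorted_in_S1 // !unrolledE //.
by rewrite (lt_sorted_ltn_nth 0 cw_sorted_lt) // inE size_cw_sorted.
Qed.

Lemma covering_gap_lt eps : 0 < eps -> eps_covering X eps ->
  forall j, (j < m)%N -> y j.+1 - y j < 2 * eps.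
Proof.
move=> eps0 cov j jm; rewrite ltNge; apply/negP => gap.
have [y0 y0_1] := andP (unrolled_in_S1 X_nonempty).
have y_m := unrolled_size.
have [y0j yjm] : y 0%N <= y j /\ y j.+1 <= y m.
  by split; apply: unrolled_le; lia.
have [p pS p_def] : exists2 p, in_S1 p & p = y j + eps \/ p = y j + eps - 1.
  have [yj0 _] := andP (unrolled_in_S1 jm).
  have [h|h] := ltrP (y j + eps) 1.
    by exists (y j + eps); [apply/andP; split; lra | left].
  by exists (y j + eps - 1); [apply/andP; split; lra | right].
have [z zX] := cov p pS; have := zX; rewrite -(mem_sort <=%R) => /(nthP 0).
rewrite size_cw_sorted => -[i im <-] {z zX}.
move/(circ_dist_lt_cases pS (cw_sorted_in_S1 im)); rewrite -unrolledE //.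
have [yi0 yi1] := andP (unrolled_in_S1 im).
have y0i : y 0%N <= y i by apply: unrolled_le; lia.
have [ij|ji] := leqP i j.
  have : y i <= y j by apply: unrolled_le; rewrite ij ltnW.
  by move=> yij; case: p_def => ->; case=> /andP[? ?]; lra.
have : y j.+1 <= y i by apply: unrolled_le; rewrite ji ltnW.
by move=> yij; case: p_def => ->; case=> /andP[? ?]; lra.
Qed.

Section SnapToPoints.
Variables (r d : R) (n k : nat).
Hypotheses (X_gt1 : (1 < m)%N) (gap_le : forall j, (j < m)%N -> y j.+1 - y j <= d).
Hypotheses (k_lt : (2 * k < n)%N) (kd_r : k%:R / n%:R + d <= r).
Hypothesis n_large : n%:R^-1 <= y m - y 1%N.

Let n_gt0 : (0 < n)%N.
Proof. exact: leq_ltn_trans k_lt. Qed.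

Let pred_n_lt : (n.-1 < n)%N.
Proof. by rewrite ltn_predL n_gt0. Qed.

Local Notation t i := (y 0%N + i%:R / n%:R).
Local Notation s i := (snap_index y m (t i)).

Lemma snap_bracket i : (i < n)%N -> (s i < m)%N && (y (s i) <= t i < y (s i).+1).
Proof.
move=> i_n; apply: snap_indexP.
have n0 : 0 < (n%:R : R) by rewrite ltr0n; lia.
by rewrite unrolled_size lerDl divr_ge0 //= ltrD2l ltr_pdivrMr // mul1r ltr_nat.
Qed.

Lemma snap_mono i j : (i <= j < n)%N -> (s i <= s j)%N.
Proof.
move=> /andP[ij j_n]; rewrite leqNgt; apply/negP => ji.
have /and3P[sim yi _] := snap_bracket (leq_ltn_trans ij j_n).
have /and3P[_ _ tj] := snap_bracket j_n.
have : y (s j).+1 <= y (s i) by apply: unrolled_le; rewrite ji ltnW.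
have : t i <= t j by rewrite lerD2l ler_wpM2r ?invr_ge0 ?ler_nat.
lra.
Qed.

Lemma snap_edge (v w : 'I_n) : Cnk_edge n k v w -> s v != s w ->
  (0 < cw_dist (x (s v)) (x (s w))) && (cw_dist (x (s v)) (x (s w)) < r).
Proof.
rewrite /Cnk_edge => /andP[_ dk] svw.
have /and3P[svm _ tv] := snap_bracket (ltn_ord v).
have /and3P[swm yw _] := snap_bracket (ltn_ord w).
have lt_snap : (s w < s v)%N = (w < v)%N.
  have [wv|vw] := ltnP w v.
    by rewrite ltn_neqAle eq_sym svw snap_mono // (ltnW wv) ltn_ord.
  by apply/negbTE; rewrite -leqNgt snap_mono // vw ltn_ord.
have gap_v := gap_le svm.
rewrite cw_dist_gt0 ?cw_sorted_in_S1 //=; last first.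
  by rewrite (nth_uniq 0) ?size_cw_sorted ?sort_uniq.
rewrite cw_dist_cw_sorted // {}lt_snap.
have := grid_cyc_diff (y 0%N) v w.
have : ((w + n - v) %% n)%N%:R / n%:R <= k%:R / n%:R :> R.
  by rewrite ler_wpM2r ?invr_ge0 ?ler_nat.
by move: kd_r; lra.
Qed.

Lemma snap_first_lt_last : (s 0%N < s n.-1)%N.
Proof.
have y01 : y 0%N < y 1%N by apply: unrolled_lt; rewrite (ltnW X_gt1).
have s_first : s 0%N = 0%N.
  have /and3P[s0m ys0 _] := snap_bracket n_gt0.
  apply/eqP; rewrite -leqn0 leqNgt; apply/negP => s0_gt0.
  have : y 1%N <= y (s 0%N) by apply: unrolled_le; rewrite s0_gt0 ltnW.
  by move: ys0; rewrite mul0r addr0; lra.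
rewrite s_first lt0n; apply/negP => /eqP s_last.
have /and3P[_ _ t_last] := snap_bracket pred_n_lt; rewrite {}s_last in t_last.
have n0 : (n%:R : R) != 0 by rewrite pnatr_eq0 -lt0n n_gt0.
have : n.-1%:R / n%:R + n%:R^-1 = 1 :> R.
  by rewrite -[X in _ + X]mul1r -mulrDl natr1 prednK ?n_gt0 // divff.
have := unrolled_size; move: n_large; lra.
Qed.

Lemma wf_lt_ge_of_gaps : k%:R / n%:R <= wf_lt X r.
Proof.
have s_lt (i : 'I_n) : (s i < m)%N by case/and3P: (snap_bracket (ltn_ord i)).
pose f i := Ordinal (s_lt i).
apply: (le_wf_lt (f := f)) => //; apply: nondecreasing_cyc_hom.
- by move=> i j ij; apply: snap_mono; rewrite ij ltn_ord.
- move=> v w vw; have [fvw|fvw] := eqVneq (f v) (f w); first by right.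
  by left; apply: snap_edge.
- exists (Ordinal n_gt0), (Ordinal pred_n_lt) => /(congr1 val) /= s_eq.
  by have := snap_first_lt_last; rewrite s_eq ltnn.
Qed.

End SnapToPoints.

End SortedPoints.

Theorem proposition5p2 (R : realType) (r eps : R) (X : seq R) :
  0 < r -> r < 2^-1 ->
  uniq X -> all (@in_S1 R) X ->
  0 < eps -> eps_covering X eps ->
  r - 2 * eps < wf_lt X r.
Proof.
move=> _ r_half X_uniq X_S1 eps_gt0 cov.
have X0 := covering_size_gt0 cov.
have [r_small|r_large] := ltrP (r - 2 * eps) 0.
  exact: lt_le_trans r_small (wf_lt_ge0 _ X0).
have gap_lt := covering_gap_lt X_uniq X_S1 X0 eps_gt0 cov.
have [d d_lt gap_le] := exists_ub_lt gap_lt.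
have y_m := unrolled_size X0.
have X1 : (1 < size X)%N.
  rewrite ltn_neqAle X0 andbT; apply/eqP => size1.
  by move: (gap_lt 0%N X0) y_m; rewrite -size1; lra.
have y01 : unrolled X 0%N < unrolled X 1%N.
  by apply: (unrolled_lt X_uniq X_S1 X0); rewrite /= ltnW.
have y1m : 0 < unrolled X (size X) - unrolled X 1%N.
  by rewrite subr_gt0; apply: (unrolled_lt X_uniq X_S1 X0); rewrite X1 /=.
have gap0 := gap_le 0%N X0.
have rd_ge0 : 0 <= r - d by lra.
have rd_half : r - d < 2^-1 by lra.
have d_eps : 0 < 2 * eps - d by lra.
have [n [k [k_lt kn_le kn_gt n_large]]] :=
  exists_fraction_approx rd_ge0 rd_half d_eps y1m.
have kd_r : k%:R / n%:R + d <= r by lra.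
apply: lt_le_trans (wf_lt_ge_of_gaps X_uniq X_S1 X0 X1 gap_le k_lt kd_r n_large).
lra.
Qed.
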